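(* Let $I$ be any set, $n$ a positive integer, and $R=\prod_{i\in I}\mathbb Z/n\mathbb Z$. Let $\mathbf A$ be a $k\times l$ matrix with entries in $R$, written as $\mathbf A=\prod_{i\in I}\mathbf A_i$ with $\mathbf A_i$ a $k\times l$ matrix over $\mathbb Z/n\mathbb Z$. Then $\mathbf A$ is partition regular over $R$ if and only if there is a prime $p$ dividing $n$ such that either for some $i\in I$ the matrix $\mathbf A_i \bmod p$ (over $\mathbb F_p$) satisfies the generalised columns condition, or for infinitely many $i\in I$ the matrix $\mathbf A_i\bmod p$ satisfies the columns condition.
   Context: $\mathbf{A}$ is partition regular over $R$ if for every $r\ge1$ and every map $\chi\colon R\to\{1,\dots,r\}$ there is a nonzero $\mathbf{x}=(x_1,\dots,x_l)^{\intercal}\in R^l$ with $\mathbf{A}\mathbf{x}=0$ and $\chi(x_1)=\dots=\chi(x_l)$. For a matrix $\mathbf B$ over a ring $S$ with columns $\mathbf c_1,\dots,\mathbf c_l\in S^k$: generalised columns condition: there exist $m\ge0$, a partition $\{1,\dots,l\}=I_0\cup\dots\cup I_m$ and $d_0,\dots,d_m\in S\setminus\{0\}$ with (i) $d_0\sum_{i\in I_0}\mathbf c_i=0$; (ii) for $1\le t\le m$, $d_t\sum_{i\in I_t}\mathbf c_i$ lies in the $S$-submodule generated by $\mathbf c_j$, $j\in I_0\cup\dots\cup I_{t-1}$; (iii) if $m>0$, the ideal $d_0(d_1\cdots d_m)^nS$ is infinite for every $n\ge0$. Columns condition (for $S$ a domain, here the field $\mathbb F_p$): there exist $m\ge0$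 and a partition $\{1,\dots,l\}=I_0\cup\dots\cup I_m$ with $\sum_{i\in I_0}\mathbf c_i=0$ and, for $1\le t\le m$, $\sum_{i\in I_t}\mathbf c_i$ in the span (over the fraction field) of the $\mathbf c_j$ with $j\in I_0\cup\dots\cup I_{t-1}$. *)

From HB Require Import structures.
From mathcomp Require Import all_boot all_order all_algebra.
Set Implicit Arguments. Unset Strict Implicit. Unset Printing Implicit Defensive.
Import Order.TTheory GRing.Theory Num.Theory.
Local Open Scope ring_scope.

Definition finitely_many (T : Type) (P : T -> Prop) : Prop :=
  exists (N : nat) (g : 'I_N -> T), forall x, P x -> exists j, g j = x.

Definition infinitely_many (T : Type) (P : T -> Prop) : Prop :=
  ~ finitely_many P.

(* The partition {1..l} = I_0 u ... u I_m (nonempty blocks) is encoded by a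
   surjection f : 'I_l -> 'I_m.+1 (I_t = f^-1(t)). *)
Definition gen_columns_condition (S : comNzRingType) (k l : nat)
    (B : 'M[S]_(k, l)) : Prop :=
  exists (m : nat) (f : 'I_l -> 'I_m.+1) (d : 'I_m.+1 -> S),
    (forall t, exists j, f j = t) /\
    (forall t, d t != 0) /\
    d ord0 *: (\sum_(j < l | f j == ord0) col j B) = 0 /\
    (forall t : 'I_m.+1, t != ord0 ->
       exists lam : 'I_l -> S,
         d t *: (\sum_(j < l | f j == t) col j B)
         = \sum_(j < l | (f j < t)%N) lam j *: col j B) /\
    ((0 < m)%N -> forall e : nat,
       infinitely_many
         (fun y : S => exists x : S,
             y = d ord0 * (\prod_(t < m.+1 | t != ord0) d t) ^+ e * x)).

(* Columns condition for a matrix over a field F (the fraction field of F is F). *)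
Definition columns_condition (F : fieldType) (k l : nat) (B : 'M[F]_(k, l)) : Prop :=
  exists (m : nat) (f : 'I_l -> 'I_m.+1),
    (forall t, exists j, f j = t) /\
    \sum_(j < l | f j == ord0) col j B = 0 /\
    (forall t : 'I_m.+1, t != ord0 ->
       exists lam : 'I_l -> F,
         \sum_(j < l | f j == t) col j B
         = \sum_(j < l | (f j < t)%N) lam j *: col j B).

(* Z/nZ is represented by 'I_n (with arithmetic mod n); R = prod_{i in I} Z/nZ
   is the type I -> 'I_n, with componentwise operations. *)
Definition Rprod (I : Type) (n : nat) := I -> 'I_n.

Definition solves (I : Type) (n k l : nat) (A : 'M[Rprod I n]_(k, l))
    (x : 'I_l -> Rprod I n) : Prop :=
  forall (a : 'I_k) (i : I), ((\sum_(j < l) A a j i * x j i) %% n)%N = 0%N.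

Definition nonzero_vec (I : Type) (n l : nat) (x : 'I_l -> Rprod I n) : Prop :=
  exists (j : 'I_l) (i : I), (x j i : nat) != 0%N.

Definition partition_regular (I : Type) (n k l : nat) (A : 'M[Rprod I n]_(k, l)) : Prop :=
  forall (r : nat), (0 < r)%N -> forall chi : Rprod I n -> 'I_r,
    exists x : 'I_l -> Rprod I n,
      nonzero_vec x /\ solves A x /\ forall j j', chi (x j) = chi (x j').

Definition component_mod_p (I : Type) (n k l : nat) (p : nat)
    (A : 'M[Rprod I n]_(k, l)) (i : I) : 'M['F_p]_(k, l) :=
  \matrix_(a < k, b < l) (((A a b i : 'I_n) : nat)%:R : 'F_p).

From HB Require Import structures.
From mathcomp Require Import all_boot all_order all_algebra.
From mathcomp Require Import zify boolp wochoice.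
Set Implicit Arguments. Unset Strict Implicit. Unset Printing Implicit Defensive.
Import GRing.Theory.

(* If some [A_i mod p] satisfies the generalised columns
   condition then, [F_p] being finite, its columns sum to zero and [N/p] placed
   at coordinate [i] solves [A x = 0] with all [x_j] equal.  If infinitely many
   [A_i mod p] satisfy the columns condition, infinitely many of them are one
   matrix [B].  Rado's theorem over the finite field [F_p] (via Hales-Jewett and
   Deuber-type systems) yields, for [r] colours, a finite [X] such that every
   colouring of [F_p^X] has a monochromatic solution of [B]; scaled by [N/p], it
   is copied into [#|X|] of those coordinates.

   Otherwise, no [A_i mod p] has zero row sums and only finitely
   many coordinates [i] have an [A_i mod p] with the columns condition.  Colour
   [y] by its values there, by its content [e] (the gcd of [N] and the [y i]),
   and, for a prime [p] dividing [N/e] and a well-order of [I], by the column of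
   [A] and the value of [y] at the least coordinate where [y/e] is nonzero mod
   [p].  In a monochromatic solution the excluded coordinates are constant,
   hence zero; the vectors [x_j/e mod p] solve the reduced systems, and sorting
   their leading coordinates gives the columns condition for [A_i mod p] at
   the leading coordinate [i] of [x_1]; so [i] is excluded, yet [x_1 i <> 0]. *)

(** * The Hales-Jewett theorem *)

Definition ffun_cat (T : Type) m n (u : {ffun 'I_m -> T}) (v : {ffun 'I_n -> T}) :
    {ffun 'I_(m + n) -> T} :=
  [ffun i => match split i with inl a => u a | inr b => v b end].

Lemma ffun_cat_lshift (T : Type) m n (u : {ffun 'I_m -> T}) (v : {ffun 'I_n -> T}) i :
  ffun_cat u v (lshift n i) = u i.
Proof. by rewrite ffunE (unsplitK (inl _ i)). Qed.

Lemma ffun_cat_rshift (T : Type) m n (u : {ffun 'I_m -> T}) (v : {ffun 'I_n -> T}) i :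
  ffun_cat u v (rshift m i) = v i.
Proof. by rewrite ffunE (unsplitK (inr _ i)). Qed.

Section Words.
Variable T : Type.

(* A variable word over [T] uses [None] for the variable; a combinatorial line is
   the family of its substitution instances. *)
Definition subst_word N (w : {ffun 'I_N -> option T}) (a : T) : {ffun 'I_N -> T} :=
  [ffun i => odflt a (w i)].

Definition variable_word N (w : {ffun 'I_N -> option T}) := exists i, w i = None.

Definition monochromatic_line (C : Type) N (chi : {ffun 'I_N -> T} -> C)
    (w : {ffun 'I_N -> option T}) :=
  variable_word w /\ forall a b, chi (subst_word w a) = chi (subst_word w b).

Definition hales_jewett_property :=
  forall C : finType, exists N, forall chi : {ffun 'I_N -> T} -> C,
    exists w, monochromatic_line chi w.

Lemma subst_word_cat N1 N2 (w1 : {ffun 'I_N1 -> option T}) (w2 : {ffun 'I_N2 -> option T}) a :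
  subst_word (ffun_cat w1 w2) a = ffun_cat (subst_word w1 a) (subst_word w2 a).
Proof. by apply/ffunP=> i; rewrite !ffunE; case: (split i) => j; rewrite ffunE. Qed.

Lemma subst_word_const N (u : {ffun 'I_N -> T}) a : subst_word [ffun i => Some (u i)] a = u.
Proof. by apply/ffunP=> i; rewrite !ffunE. Qed.

Lemma variable_word_catl N1 N2 (w1 : {ffun 'I_N1 -> option T}) (w2 : {ffun 'I_N2 -> option T}) :
  variable_word w1 -> variable_word (ffun_cat w1 w2).
Proof. by case=> i w1i; exists (lshift N2 i); rewrite ffun_cat_lshift. Qed.

Lemma variable_word_catr N1 N2 (w1 : {ffun 'I_N1 -> option T}) (w2 : {ffun 'I_N2 -> option T}) :
  variable_word w2 -> variable_word (ffun_cat w1 w2).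
Proof. by case=> i w2i; exists (rshift N1 i); rewrite ffun_cat_rshift. Qed.

Lemma monochromatic_line_cat (C : Type) N1 N2 (chi : {ffun 'I_(N1 + N2) -> T} -> C)
    (u : {ffun 'I_N1 -> T}) (w : {ffun 'I_N2 -> option T}) :
  monochromatic_line (fun v => chi (ffun_cat u v)) w ->
  exists w', monochromatic_line chi w'.
Proof.
case=> vw mono; exists (ffun_cat [ffun i => Some (u i)] w); split.
  exact: variable_word_catr.
by move=> a b; rewrite !subst_word_cat !subst_word_const; apply: mono.
Qed.

End Words.

Lemma hales_jewett_property_small K : (K <= 1)%N -> hales_jewett_property 'I_K.
Proof.
move=> K1 C; exists 1%N => chi; exists [ffun _ => None].
split; first by exists ord0; rewrite ffunE.
by move=> a b; have -> // : a = b; apply: ord_inj; move: (ltn_ord a) (ltn_ord b); lia.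
Qed.

Section ColourFocusing.
Variables (k : nat) (C : finType).
Hypothesis hj : hales_jewett_property 'I_k.+1.
Local Notation word N := {ffun 'I_N -> 'I_k.+2}.
Local Notation vword N := {ffun 'I_N -> option 'I_k.+2}.

Definition focused_lines N (chi : word N -> C) (f : word N) (F : seq (vword N * C)) :=
  uniq (map snd F) /\
  forall w c, (w, c) \in F -> [/\ variable_word w, subst_word w ord_max = f &
    forall a, a != ord_max -> chi (subst_word w a) = c].

Definition colour_focusing s := exists N, forall chi : word N -> C,
  (exists w, monochromatic_line chi w) \/
  exists f F, size F = s /\ focused_lines chi f F.

Lemma focused_line_monochromatic N (chi : word N -> C) f F w c :
  focused_lines chi f F -> (w, c) \in F -> chi f = c -> monochromatic_line chi w.
Proof.
move=> [_ hF] /hF[vw wf wc] fc; split=> // a b.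
have chiw x : chi (subst_word w x) = c.
  by case: (eqVneq x ord_max) => [->|/wc //]; rewrite wf.
by rewrite !chiw.
Qed.

Lemma colour_focusing0 : colour_focusing 0.
Proof. by exists 0%N => chi; right; exists [ffun i => ord0], [::]. Qed.

(* Colour a word of length [N2] over the smaller alphabet by the colouring it
   induces on the words of length [N1]; along a monochromatic line [line] of
   this colouring all non-maximal letters induce the same colouring [chi0], so
   every focused family for [chi0] extends by one line. *)
Lemma colour_focusingS s : colour_focusing s -> colour_focusing s.+1.
Proof.
case=> N1 focus; have [N2 hjN2] := hj {ffun word N1 -> C}.
exists (N2 + N1)%N => chi.
pose lift_word (u : {ffun 'I_N2 -> 'I_k.+1}) : word N2 := [ffun i => lift ord_max (u i)].
have [line [v_line m_line]] := hjN2 (fun u => [ffun v => chi (ffun_cat (lift_word u) v)]).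
pose line' : vword N2 := [ffun i => omap (lift ord_max) (line i)].
have subst_line' a : subst_word line' (lift ord_max a) = lift_word (subst_word line a).
  by apply/ffunP=> i; rewrite !ffunE; case: (line i).
pose chi0 v := chi (ffun_cat (subst_word line' ord0) v).
have chi0E a v : a != ord_max -> chi (ffun_cat (subst_word line' a) v) = chi0 v.
  case: (unliftP ord_max a) => [a' ->|->]; last by rewrite eqxx.
  move=> _; rewrite /chi0 (_ : ord0 = lift ord_max ord0); last exact/val_inj.
  by rewrite !subst_line'; move/ffunP: (m_line a' ord0) => /(_ v); rewrite !ffunE.
have [[m mm]|[f [F [sF [uF hF]]]]] := focus chi0.
  by left; apply: monochromatic_line_cat mm.
case: (boolP (chi0 f \in map snd F)) => [/mapP[[m c] mF /= fc]|nf].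
  by left; apply: monochromatic_line_cat (focused_line_monochromatic (conj uF hF) mF fc).
right; exists (ffun_cat (subst_word line' ord_max) f).
exists ((ffun_cat line' [ffun i => Some (f i)], chi0 f) ::
        map (fun wc => (ffun_cat line' wc.1, wc.2)) F).
split; first by rewrite /= size_map sF.
split; first by rewrite /= -map_comp nf.
have v_line' : variable_word line' by case: v_line => i line_i; exists i; rewrite ffunE line_i.
move=> w c; rewrite inE => /orP[/eqP [-> ->]|/mapP[[w0 c0] w0F [-> ->]]] /=.
  split; first exact: variable_word_catl.
    by rewrite subst_word_cat subst_word_const.
  by move=> a ha; rewrite subst_word_cat subst_word_const chi0E.
have [vw0 w0f w0c] := hF _ _ w0F; split; first exact: variable_word_catl.
  by rewrite subst_word_cat w0f.
by move=> a ha; rewrite subst_word_cat chi0E // w0c.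
Qed.

Lemma colour_focusingP s : colour_focusing s.
Proof. by elim: s => [|s]; [exact: colour_focusing0 | exact: colour_focusingS]. Qed.

End ColourFocusing.

(* With [#|C|] focused lines, the colour of their common endpoint is one of theirs. *)
Lemma hales_jewett_propertyS k :
  hales_jewett_property 'I_k.+1 -> hales_jewett_property 'I_k.+2.
Proof.
move=> hj C; have [N focus] := colour_focusingP C hj #|C|.
exists N => chi; have [//|[f [F [sF [uF hF]]]]] := focus chi.
case: (boolP (chi f \in map snd F)) => [/mapP[[w c] wF /= fc]|nf].
  by exists w; apply: focused_line_monochromatic (conj uF hF) wF fc.
have /card_uniqP : uniq (chi f :: map snd F) by rewrite /= nf.
rewrite /= size_map sF => card_eq.
by have := max_card (mem (chi f :: map snd F)); rewrite card_eq ltnn.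
Qed.

Lemma hales_jewett_property_ord K : hales_jewett_property 'I_K.
Proof.
case: K => [|K]; first exact: hales_jewett_property_small.
elim: K => [|K IH]; first exact: hales_jewett_property_small.
exact: hales_jewett_propertyS.
Qed.

Theorem hales_jewett (T : finType) : hales_jewett_property T.
Proof.
move=> C; have [N hjN] := hales_jewett_property_ord #|T| C; exists N => chi.
have [w [[i0 wi0] mw]] := hjN (fun u => chi [ffun i => enum_val (u i)]).
exists [ffun i => omap enum_val (w i)]; split; first by exists i0; rewrite ffunE wi0.
have substE a : subst_word [ffun i => omap enum_val (w i)] a =
                [ffun i => enum_val (subst_word w (enum_rank a) i)].
  by apply/ffunP=> i; rewrite !ffunE; case: (w i) => //=; rewrite enum_rankK.
by move=> a b; rewrite !substE; exact: mw.
Qed.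

Local Open Scope ring_scope.

(** * Rado's theorem over fields *)

Lemma increasing_pigeonhole (C : finType) (kap : nat -> C) m :
  exists c (g : nat -> nat),
    (forall t, (t <= m)%N -> (g t <= #|C| * m)%N /\ kap (g t) = c) /\
    {in [pred t | (t <= m)%N] &, {mono g : s t / (s < t)%N}}.
Proof.
set M := (#|C| * m)%N; pose r := iota 0 M.+1.
have [c mc] : exists c, (m < count (fun i => kap i == c) r)%N.
  apply/existsP; apply: contraT; rewrite negb_exists => /forallP few.
  have : (\sum_(c : C) count (fun i => kap i == c) r <= \sum_(c : C) m)%N.
    by apply: leq_sum => c _; rewrite leqNgt few.
  have -> : (\sum_(c : C) count (fun i => kap i == c) r)%N = size r.
    elim: (r) => [|x s IH] /=; first by rewrite big1.
    rewrite big_split /= IH (bigD1 (kap x)) //= eqxx big1 // => c /negbTE.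
    by rewrite eq_sym => ->.
  by rewrite sum_nat_const cardT -cardE size_iota ltnn.
pose s := filter (fun i => kap i == c) r.
have s_sorted : sorted ltn s by apply: sorted_filter; [exact: ltn_trans | exact: iota_ltn_sorted].
have ms : (m < size s)%N by rewrite size_filter.
exists c, (nth 0%N s); split.
  move=> t tm; have : nth 0%N s t \in s by apply: mem_nth; apply: leq_ltn_trans ms.
  by rewrite mem_filter mem_iota leq0n add0n ltnS /= => /andP[/eqP -> ->].
apply/leqW_mono_in/leq_mono_in => t t' tm t'm.
by apply: (sorted_ltn_nth ltn_trans) => //; rewrite inE (leq_ltn_trans _ ms).
Qed.

(* Row [i] of the system [v_0, ..., v_m]; only [lam j] with [i < j <= m] matter. *)
Definition tail_comb (F : nzRingType) (X : finType) (v : nat -> {ffun X -> F}) (m i : nat)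
    (lam : nat -> F) : {ffun X -> F} :=
  [ffun x => v i x + \sum_(i.+1 <= j < m.+1) lam j * v j x].

Definition unitriangular (F : nzRingType) (X : finType) m (v : nat -> {ffun X -> F})
    (xi : nat -> X) :=
  (forall i, (i <= m)%N -> v i (xi i) = 1) /\
  (forall i j, (i < j)%N -> (j <= m)%N -> v j (xi i) = 0).

Lemma tail_comb_unitriangular (F : nzRingType) (X : finType) m (v : nat -> {ffun X -> F}) xi i lam :
  unitriangular m v xi -> (i <= m)%N -> tail_comb v m i lam (xi i) = 1.
Proof.
move=> [v1 v0] im; rewrite ffunE v1 // big_nat big1 ?addr0 // => j /andP[ij jm].
by rewrite v0 ?mulr0.
Qed.

Lemma tail_comb_sum (F : nzRingType) (X : finType) m (v : nat -> {ffun X -> F}) i lam x :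
  (i <= m)%N -> tail_comb v m i lam x =
  \sum_(0 <= s < m.+1) ((s == i)%:R + (i < s)%:R * lam s) * v s x.
Proof.
move=> im; rewrite ffunE; under [RHS]eq_bigr => s _ do rewrite mulrDl.
rewrite big_split /=; congr (_ + _).
  rewrite (bigD1_seq i) ?mem_index_iota ?iota_uniq //= eqxx mul1r big1 ?addr0 //.
  by move=> s /negbTE ->; rewrite mul0r.
rewrite (@big_cat_nat _ _ _ i.+1 0 m.+1) //= [X in _ = X + _]big_nat [X in _ = X + _]big1 ?add0r.
  by apply: eq_big_nat => s /andP[i_s _]; rewrite i_s mul1r.
by move=> s /andP[_ si]; rewrite ltnNge -ltnS si !mul0r.
Qed.

Section MonochromaticSystems.
Variable F : finNzRingType.

Definition rowwise_monochromatic_system m (C : finType) := exists X : finType,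
  forall chi : {ffun X -> F} -> C, exists v xi, unitriangular m v xi /\
    forall i, (i <= m)%N -> forall lam lam', chi (tail_comb v m i lam) = chi (tail_comb v m i lam').

Lemma rowwise_monochromatic_system0 C : rowwise_monochromatic_system 0 C.
Proof.
exists unit => chi; exists (fun _ => [ffun _ => 1]), (fun _ => tt).
split; first by split=> [i _|i j ij /(leq_trans ij)]; rewrite ?ffunE.
move=> i; rewrite leqn0 => /eqP -> lam lam'; congr chi.
by apply/ffunP=> x; rewrite !ffunE !big_geq.
Qed.

Lemma rowwise_monochromatic_systemS m C :
  rowwise_monochromatic_system m C -> rowwise_monochromatic_system m.+1 C.
Proof.
move=> [X' sysX']; have [N hjN] := hales_jewett {ffun option X' -> F} C.
exists ('I_N * option X')%type => chi.
pose flat (u : {ffun 'I_N -> {ffun option X' -> F}}) : {ffun 'I_N * option X' -> F} :=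
  [ffun x => u x.1 x.2].
have [w [[mu0 wmu0] mono_w]] := hjN (fun u => chi (flat u)).
(* The new system is the point of the line [w] whose variable letter is the
   indicator [a0] of [None], followed by the old system copied by [Q] onto the
   variable coordinates of [w]; row [0] stays on the line [w], and row [i.+1]
   is the [Q]-image of row [i] of the old system. *)
pose Q (u : {ffun X' -> F}) : {ffun 'I_N * option X' -> F} :=
  [ffun x => if w x.1 is None then (if x.2 is Some y then u y else 0) else 0].
have [v' [xi' [[v'1 v'0] mono_v']]] := sysX' (fun u => chi (Q u)).
pose a0 : {ffun option X' -> F} := [ffun y => if y is None then 1 else 0].
pose v (i : nat) := if i is i'.+1 then Q (v' i') else flat (subst_word w a0).
exists v, (fun i => if i is i'.+1 then (mu0, Some (xi' i')) else (mu0, None)).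
split.
  split=> [[|i] im|[|i] [|j] //= ij jm]; rewrite !ffunE /= wmu0 //= ?ffunE ?v'1 //.
  exact: v'0.
case=> [|i] im lam lam'.
  have row0 lm : tail_comb v m.+1 0 lm = flat (subst_word w [ffun y => a0 y +
       (if y is Some x then \sum_(0 <= j < m.+1) lm j.+1 * v' j x else 0)]).
    apply/ffunP=> -[mu y]; rewrite !ffunE big_add1 /=.
    case wmu: (w mu) => [c|] /=.
      by rewrite big1 ?addr0 // => j _; rewrite /v !ffunE /= wmu mulr0.
    rewrite !ffunE /=; case: y => [y|] /=.
      by congr (_ + _); apply: eq_bigr => j _; rewrite ffunE /= wmu.
    by rewrite big1 // => j _; rewrite ffunE /= wmu mulr0.
  by rewrite !row0; exact: mono_w.
have rowS lm : tail_comb v m.+1 i.+1 lm = Q (tail_comb v' m i (fun j => lm j.+1)).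
  apply/ffunP=> -[mu y]; rewrite !ffunE big_add1 /=.
  case wmu: (w mu) => [c|] /=.
    by rewrite big1 ?addr0 // => j _; rewrite /v !ffunE /= wmu mulr0.
  case: y => [y|] /=; rewrite ?ffunE.
    by congr (_ + _); apply: eq_bigr => j _; rewrite ffunE /= wmu.
  by rewrite big1 ?addr0 // => j _; rewrite ffunE /= wmu mulr0.
by rewrite !rowS; apply: mono_v'.
Qed.

Lemma rowwise_monochromatic_systemP m C : rowwise_monochromatic_system m C.
Proof.
elim: m => [|m]; [exact: rowwise_monochromatic_system0 | exact: rowwise_monochromatic_systemS].
Qed.

Lemma tail_comb_subseq (X : finType) (v : nat -> {ffun X -> F}) m M (g : nat -> nat) t lam :
  {in [pred t | (t <= m)%N] &, {mono g : s t / (s < t)%N}} ->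
  (forall t, (t <= m)%N -> (g t <= M)%N) -> (t <= m)%N ->
  exists lam', tail_comb (v \o g) m t lam = tail_comb v M (g t) lam'.
Proof.
move=> g_mono gM tm.
exists (fun j => \sum_(0 <= t' < m.+1 | g t' == j) lam t').
apply/ffunP=> x; rewrite !ffunE; congr (_ + _).
under [RHS]eq_bigr => j _ do rewrite mulr_suml.
rewrite (exchange_big_dep xpredT) //= (@big_nat_widenl _ _ _ _ 0 _ _ _ (leq0n t.+1)) big_mkcond /=.
apply: eq_big_nat => j /andP[_ jm]; rewrite ltnS in jm.
case: ifP => tj.
  rewrite big_mkcond (bigD1_seq (g j)) ?iota_uniq //=; last first.
    by rewrite mem_index_iota ltnS gM // g_mono ?inE // tj.
  by rewrite eqxx big1 ?addr0 // => i /negbTE; rewrite eq_sym => ->.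
by rewrite big1_seq // => i /andP[/eqP <-]; rewrite mem_index_iota g_mono // tj.
Qed.

Lemma monochromatic_system m (C : finType) : exists X : finType,
  forall chi : {ffun X -> F} -> C, exists v xi c, unitriangular m v xi /\
    forall i, (i <= m)%N -> forall lam, chi (tail_comb v m i lam) = c.
Proof.
have [X sysX] := rowwise_monochromatic_systemP (#|C| * m) C; exists X => chi.
have [v [xi [[v1 v0] mono_v]]] := sysX chi.
have [c [g [gc g_mono]]] :=
  increasing_pigeonhole (fun i => chi (tail_comb v (#|C| * m) i (fun _ => 0))) m.
exists (v \o g), (xi \o g), c; split.
  split=> [t tm|t j tj jm]; first by apply: v1; case: (gc t tm).
  by apply: v0; [rewrite g_mono // inE (leq_trans (ltnW tj)) | case: (gc j jm)].
move=> t tm lam; have [gM <-] := gc t tm.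
have [lam' ->] := tail_comb_subseq v lam g_mono (fun t tm => (gc t tm).1) tm.
exact: mono_v.
Qed.

End MonochromaticSystems.

Lemma columns_conditionP (F : fieldType) k l (B : 'M[F]_(k, l)) :
  columns_condition B <->
  exists m (f : 'I_l -> 'I_m.+1) (lam : 'I_m.+1 -> 'I_l -> F),
    [/\ forall t, exists j, f j = t,
        forall a, \sum_(j < l | f j == ord0) B a j = 0 &
        forall t a, t != ord0 ->
          \sum_(j < l | f j == t) B a j = \sum_(j < l | (f j < t)%N) lam t j * B a j].
Proof.
have sumE (P : pred 'I_l) (mu : 'I_l -> F) a :
    (\sum_(j < l | P j) mu j *: col j B) a 0 = \sum_(j < l | P j) mu j * B a j.
  by rewrite summxE; apply: eq_bigr => j _; rewrite !mxE.
have sum1E (P : pred 'I_l) a : (\sum_(j < l | P j) col j B) a 0 = \sum_(j < l | P j) B a j.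
  by rewrite summxE; apply: eq_bigr => j _; rewrite !mxE.
split=> [[m [f [f_onto [B0 Bt]]]]|[m [f [lam [f_onto B0 Bt]]]]].
  have [lam lamP] : exists lam : 'I_m.+1 -> 'I_l -> F, forall t, t != ord0 ->
      \sum_(j < l | f j == t) col j B = \sum_(j < l | (f j < t)%N) lam t j *: col j B.
    suff /fin_all_exists[lam lamP] : forall t : 'I_m.+1, exists mu : 'I_l -> F, t != ord0 ->
        \sum_(j < l | f j == t) col j B = \sum_(j < l | (f j < t)%N) mu j *: col j B.
      by exists lam.
    move=> t; case: (eqVneq t ord0) => [->|/Bt[mu ->]]; last by exists mu.
    by exists (fun _ => 0).
  exists m, f, lam; split=> // [a|t a /lamP]; first by rewrite -sum1E B0 mxE.
  by move/matrixP/(_ a 0); rewrite sum1E sumE.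
exists m, f; split=> //; split=> [|t /Bt Bt'].
  by apply/matrixP=> a b; rewrite ord1 sum1E B0 mxE.
by exists (lam t); apply/matrixP=> a b; rewrite ord1 sum1E sumE Bt'.
Qed.

Lemma columns_condition_tail_solutions (F : fieldType) k l (B : 'M[F]_(k, l)) m
    (f : 'I_l -> 'I_m.+1) (lam : 'I_m.+1 -> 'I_l -> F) :
  (forall a, \sum_(j < l | f j == ord0) B a j = 0) ->
  (forall t a, t != ord0 ->
     \sum_(j < l | f j == t) B a j = \sum_(j < l | (f j < t)%N) lam t j * B a j) ->
  forall (X : finType) (v : nat -> {ffun X -> F}) a x,
    \sum_(j < l) B a j * tail_comb v m (f j) (fun s => - lam (inord s) j) x = 0.
Proof.
move=> B0 Bt X v a x.
have selectE (P : pred 'I_l) (mu : 'I_l -> F) :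
    \sum_(j < l) B a j * ((P j)%:R * mu j) = \sum_(j < l | P j) mu j * B a j.
  rewrite [RHS]big_mkcond; apply: eq_bigr => j _.
  by case: (P j); rewrite ?mul0r ?mulr0 // mul1r mulrC.
under eq_bigr => j _ do rewrite tail_comb_sum ?leq_ord // mulr_sumr.
rewrite exchange_big /= big_nat big1 // => s /andP[_ sm].
under eq_bigr => j _ do rewrite mulrA.
rewrite -mulr_suml [X in X * _](_ : _ = 0) ?mul0r //.
set t := (inord s : 'I_m.+1); have st : s = t by rewrite /t inordK.
clearbody t; subst s.
under eq_bigr => j _ do rewrite mulrDr -[(_ == _)%:R]mulr1 eq_sym.
rewrite big_split /= !selectE.
under eq_bigr => j _ do rewrite mul1r.
under [X in _ + X]eq_bigr => j _ do rewrite mulNr.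
rewrite sumrN; case: (eqVneq t ord0) => [->|/Bt ->]; last by rewrite subrr.
by rewrite B0 big_pred0 ?subrr.
Qed.

Theorem columns_condition_monochromatic (F : finFieldType) k l (B : 'M[F]_(k, l)) :
  columns_condition B -> forall C : finType, exists X : finType,
    forall chi : {ffun X -> F} -> C, exists y : 'I_l -> {ffun X -> F},
      [/\ forall a x, \sum_(j < l) B a j * y j x = 0, exists j x, y j x != 0 &
          forall j j', chi (y j) = chi (y j')].
Proof.
move=> /columns_conditionP[m [f [lam [f_onto B0 Bt]]]] C.
have [X sysX] := monochromatic_system F m C; exists X => chi.
have [v [xi [c [tri mono]]]] := sysX chi.
exists (fun j => tail_comb v m (f j) (fun s => - lam (inord s) j)); split.
- exact: columns_condition_tail_solutions.
- have [j _] := f_onto ord0; exists j, (xi (f j)).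
  by rewrite tail_comb_unitriangular ?leq_ord ?oner_neq0.
- by move=> j j'; rewrite !mono ?leq_ord.
Qed.

Lemma columns_condition_staircase (F : fieldType) k l (B : 'M[F]_(k, l)) m
    (f : 'I_l -> 'I_m.+1) (u : 'I_m.+1 -> 'I_l -> F) (c : F) :
  c != 0 -> (forall t, exists j, f j = t) ->
  (forall j, u (f j) j = c) -> (forall (t : 'I_m.+1) j, (t < f j)%N -> u t j = 0) ->
  (forall t a, \sum_(j < l) B a j * u t j = 0) ->
  columns_condition B.
Proof.
move=> c0 f_onto u_diag u_above u_sol.
have row_split t a :
    c * \sum_(j < l | f j == t) B a j + \sum_(j < l | (f j < t)%N) B a j * u t j = 0.
  rewrite -[RHS](u_sol t a) [RHS](bigID (fun j => f j == t)) /= mulr_sumr; congr (_ + _).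
    by apply: eq_bigr => j /eqP <-; rewrite u_diag mulrC.
  rewrite [RHS](bigID (fun j => (f j < t)%N)) /= [X in _ = _ + X]big1 ?addr0 => [|j /andP[ft]].
    apply: eq_bigl => j; case: ltngtP => ft; rewrite ?andbT ?andbF //.
    by apply/esym/negP => /eqP fjt; move: ft; rewrite fjt ltnn.
  rewrite -leqNgt => tf; rewrite u_above ?mulr0 // ltn_neqAle tf andbT.
  by apply: contra ft => /eqP/esym tfj; apply/eqP/val_inj.
apply/columns_conditionP; exists m, f, (fun t j => - u t j / c); split=> // [a|t a _].
  move/eqP: (row_split ord0 a); rewrite [X in _ + X]big_pred0 // addr0 mulf_eq0 (negbTE c0).
  exact/eqP.
apply: (mulfI c0); move/eqP: (row_split t a); rewrite addr_eq0 => /eqP ->.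
rewrite mulr_sumr -sumrN; apply: eq_bigr => j _.
by rewrite mulrA mulrCA mulfV // mulr1 mulNr mulrC.
Qed.

(* Listing the leading coordinates [L j] in [R]-order yields a staircase. *)
Lemma columns_condition_of_leading_solutions (F : fieldType) (J : eqType) (R : rel J)
    k l (B : 'M[F]_(k, l)) (L : 'I_l -> J) (U : 'I_l -> J -> F) (c : F) :
  transitive R -> total R -> antisymmetric R -> c != 0 -> (0 < l)%N ->
  (forall j, U j (L j) = c) -> (forall j i, U j i != 0 -> R (L j) i) ->
  (forall j a, \sum_(j' < l) B a j' * U j' (L j) = 0) ->
  columns_condition B.
Proof.
move=> R_tr R_tot R_anti c0 l0 U_lead U_min U_sol; pose j0 : 'I_l := Ordinal l0.
pose s := sort R (undup [seq L j | j <- enum 'I_l]).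
have s_uniq : uniq s by rewrite sort_uniq undup_uniq.
have L_s j : L j \in s by rewrite mem_sort mem_undup map_f ?mem_enum.
have s_gt0 : (0 < size s)%N.
  by rewrite lt0n size_eq0; apply/eqP => s0; have := L_s j0; rewrite s0.
pose m := (size s).-1; have size_s : size s = m.+1 by rewrite prednK.
pose f j : 'I_m.+1 := inord (index (L j) s).
have fE j : f j = index (L j) s :> nat by rewrite inordK // -size_s index_mem.
have nth_f j : nth (L j0) s (f j) = L j by rewrite fE nth_index.
have f_onto t : exists j, f j = t.
  have : nth (L j0) s t \in s by rewrite mem_nth ?size_s.
  rewrite mem_sort mem_undup => /mapP[j _ tL]; exists j; apply/val_inj.
  by rewrite /= fE -tL index_uniq ?size_s.
apply: (@columns_condition_staircase _ _ _ _ m f (fun t j => U j (nth (L j0) s t)) c) => //.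
- by move=> j; rewrite nth_f.
- move=> t j tf; apply/eqP; apply: contraTT tf => /U_min L_le; apply/negP => tf.
  have le_L : R (nth (L j0) s t) (L j).
    have s_sorted : sorted R s := sort_sorted R_tot _.
    by rewrite -(nth_f j) (sorted_ltn_nth R_tr (L j0) s_sorted) // inE size_s.
  have tL : nth (L j0) s t = L j by apply: R_anti; rewrite le_L L_le.
  have t_lt : (t < size s)%N by rewrite size_s.
  by move: tf; rewrite -(index_uniq (L j0) t_lt s_uniq) tL -fE ltnn.
- by move=> t a; have [j <-] := f_onto t; rewrite nth_f U_sol.
Qed.

(** * Finiteness and well-orders *)

Lemma finitely_many_fin (T : finType) (P : T -> Prop) : finitely_many P.
Proof. by exists #|T|, enum_val => x _; exists (enum_rank x); rewrite enum_rankK. Qed.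

Section FinitelyMany.
Variable I : Type.

Lemma finitely_many0 (P : I -> Prop) : (forall i, ~ P i) -> finitely_many P.
Proof.
by move=> nP; exists 0%N, (fun j : 'I_0 => False_rect I (notF (ltn_ord j))) => i /nP.
Qed.

Lemma sub_finitely_many (P Q : I -> Prop) :
  (forall i, P i -> Q i) -> finitely_many Q -> finitely_many P.
Proof. by move=> PQ [N [g gQ]]; exists N, g => i /PQ /gQ. Qed.

Lemma finitely_many_or (P Q : I -> Prop) :
  finitely_many P -> finitely_many Q -> finitely_many (fun i => P i \/ Q i).
Proof.
move=> [N1 [g1 g1P]] [N2 [g2 g2Q]]; exists (N1 + N2)%N.
exists (fun j => match split j with inl a => g1 a | inr b => g2 b end).
move=> i [/g1P[j <-]|/g2Q[j <-]]; [exists (lshift N2 j) | exists (rshift N1 j)];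
  by rewrite ?(unsplitK (inl _ j)) ?(unsplitK (inr _ j)).
Qed.

Lemma finitely_many_exists (T : finType) (P : T -> I -> Prop) :
  (forall t, finitely_many (P t)) -> finitely_many (fun i => exists t, P t i).
Proof.
move=> finP; suff /(_ (enum T)) : forall s : seq T,
    finitely_many (fun i => exists2 t, t \in s & P t i).
  by apply: sub_finitely_many => i [t Pti]; exists t; rewrite ?mem_enum.
elim=> [|t s IH]; first by apply: finitely_many0 => i [].
apply: sub_finitely_many (finitely_many_or (finP t) IH) => i [t'].
by rewrite inE => /orP[/eqP ->|t's] Pti; [left | right; exists t'].
Qed.

Lemma infinitely_many_pigeonhole (T : finType) (P : T -> I -> Prop) (Q : I -> Prop) :
  infinitely_many Q -> (forall i, Q i -> exists t, P t i) ->
  exists t, infinitely_many (P t).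
Proof.
move=> infQ QP; apply: contrapT => finP; apply/infQ/(sub_finitely_many QP).
by apply: finitely_many_exists => t; apply: contrapT => infPt; apply: finP; exists t.
Qed.

Lemma infinitely_many_injection (Q : I -> Prop) : infinitely_many Q ->
  forall N, exists g : 'I_N -> I, injective g /\ forall j, Q (g j).
Proof.
move=> infQ; elim=> [|N [g [g_inj gQ]]].
  by exists (fun j : 'I_0 => False_rect I (notF (ltn_ord j))); split=> -[].
have [i [Qi g_i]] : exists i, Q i /\ forall j, g j <> i.
  apply: contrapT => nQ; apply: infQ; exists N, g => i Qi; apply: contrapT => ng.
  by apply: nQ; exists i; split=> // j gj; apply: ng; exists j.
exists (fun j => if unlift ord_max j is Some j' then g j' else i); split.
  move=> j1 j2; case: (unliftP ord_max j1) => [j1' ->|->];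
    case: (unliftP ord_max j2) => [j2' ->|->] //.
  - by move/g_inj ->.
  - by move/g_i.
  - by move/esym/g_i.
by move=> j; case: (unlift ord_max j).
Qed.

End FinitelyMany.

Lemma exists_well_order (T : Type) : exists R : rel T,
  [/\ transitive R, total R, antisymmetric R &
      forall P : T -> Prop, (exists x, P x) -> exists z, P z /\ forall x, P x -> R z x].
Proof.
have [R R_wo] := well_ordering_principle {classic T}.
have R_woT : wo_chain R predT by apply: withinW.
have R_least (P : T -> Prop) : (exists x, P x) -> exists z, P z /\ forall x, P x -> R z x.
  case=> x Px; have [|z [[/asboolP Pz z_le] _]] := R_wo [pred y | `[< P y >]].
    by exists x; apply/asboolP.
  by exists z; split=> // y Py; apply/z_le/asboolP.
have R_tot : total R by move=> x y; apply: (wo_chainW R_woT).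
have R_anti : antisymmetric R by move=> x y; apply: (wo_chain_antisymmetric R_woT).
exists R; split=> // y x z xy yz.
have [|w [[w3 w_le] _]] := R_wo [pred u : {classic T} | [|| u == x, u == y | u == z]].
  by exists x; rewrite inE eqxx.
have [wx wy wz] : [/\ R w x, R w y & R w z] by split; apply: w_le; rewrite inE eqxx ?orbT.
case/or3P: w3 => /eqP ew; subst w => //.
  by rewrite (@R_anti x y) ?xy ?wx.
by rewrite -(@R_anti y z) ?yz ?wy.
Qed.

(** * Sufficiency *)

Lemma gen_columns_condition_finField (F : finFieldType) k l (B : 'M[F]_(k, l)) :
  gen_columns_condition B -> (0 < l)%N /\ \sum_(j < l) col j B = 0.
Proof.
case=> m [f [d [f_onto [d_neq0 [B0 [_ d_inf]]]]]].
have [j0 _] := f_onto ord0; split; first exact: leq_ltn_trans (leq0n _) (ltn_ord j0).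
case: m f d d_neq0 B0 d_inf {f_onto j0} => [|m] f d d_neq0 B0 d_inf; last first.
  by case: (d_inf isT 0%N); apply: finitely_many_fin.
move/eqP: B0; rewrite scaler_eq0 (negbTE (d_neq0 ord0)) => /eqP B0.
by apply: etrans B0; apply: eq_bigl => j; rewrite ord1 eqxx.
Qed.

Lemma Fp_val_lt p (y : 'F_p) : prime p -> (y < p)%N.
Proof. by move=> p_pr; move: (nat_of_ord y) (ltn_ord y) => v; rewrite (Fp_cast p_pr). Qed.

Lemma dvdn_scaled_sum (N p l : nat) (c w : 'I_l -> nat) :
  (0 < N)%N -> prime p -> (p %| N)%N ->
  (N %| \sum_(j < l) c j * (N %/ p * w j))%N =
  ((\sum_(j < l) c j * w j)%:R == 0 :> 'F_p).
Proof.
move=> N_gt0 p_pr pN.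
have Np_gt0 : (0 < N %/ p)%N by rewrite divn_gt0 ?prime_gt0 // dvdn_leq.
rewrite (eq_bigr (fun j => N %/ p * (c j * w j))%N) => [|j _]; last by rewrite mulnCA.
by rewrite -big_distrr /= -{1}(divnK pN) dvdn_pmul2l // (dvdn_pcharf (pchar_Fp p_pr)).
Qed.

Section Sufficiency.
Variables (I : Type) (n k l : nat) (A : 'M[Rprod I n.+1]_(k, l)) (p : nat).
Hypotheses (p_pr : prime p) (pN : (p %| n.+1)%N).
Local Notation N := n.+1.

Let Np_gt0 : (0 < N %/ p)%N.
Proof. by rewrite divn_gt0 ?prime_gt0 // dvdn_leq. Qed.

Section Embedding.
Variables (X : finType) (io : X -> I).
Hypothesis io_inj : injective io.

(* Scaling by [N %/ p] turns arithmetic mod [N] into arithmetic mod [p]. *)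
Definition embed_Fp (y : {ffun X -> 'F_p}) : Rprod I N := fun i =>
  inord (if pselect (exists x, io x = i) is left h then N %/ p * y (projT1 (cid h)) else 0)%N.

Lemma embed_Fp_io y x : embed_Fp y (io x) = (N %/ p * y x)%N :> nat.
Proof.
rewrite /embed_Fp; case: pselect => [h|[]]; last by exists x.
case: (cid h) => x' /= /io_inj ->; rewrite inordK //.
by rewrite -[X in (_ < X)%N](divnK pN) ltn_pmul2l ?Fp_val_lt.
Qed.

Lemma embed_Fp_out y i : ~ (exists x, io x = i) -> embed_Fp y i = 0%N :> nat.
Proof. by rewrite /embed_Fp; case: pselect => // _ _; rewrite inordK. Qed.

Lemma solves_embed_Fp (B : 'M['F_p]_(k, l)) (y : 'I_l -> {ffun X -> 'F_p}) :
  (forall x, component_mod_p p A (io x) = B) ->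
  (forall a x, \sum_(j < l) B a j * y j x = 0) ->
  solves A (fun j => embed_Fp (y j)).
Proof.
move=> ioB y_sol a i; apply/eqP; case: (pselect (exists x, io x = i)) => [[x <-]|i_out].
  rewrite -/(dvdn _ _) (eq_bigr _ (fun j _ => congr1 _ (embed_Fp_io _ x))).
  rewrite dvdn_scaled_sum //; apply/eqP; rewrite natr_sum; apply: etrans _ (y_sol a x).
  apply: eq_bigr => j _.
  by rewrite natrM natr_Zp -(ioB x) mxE.
by rewrite big1 // => j _; rewrite embed_Fp_out ?muln0.
Qed.

Lemma nonzero_embed_Fp (y : 'I_l -> {ffun X -> 'F_p}) :
  (exists j x, y j x != 0) -> nonzero_vec (fun j => embed_Fp (y j)).
Proof.
case=> j [x yx]; exists j, (io x); rewrite embed_Fp_io muln_eq0 negb_or.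
rewrite -lt0n Np_gt0 /=.
by apply: contra yx => /eqP y0; apply/eqP/val_inj.
Qed.

End Embedding.

Lemma partition_regular_of_gen_columns_condition i :
  gen_columns_condition (component_mod_p p A i) -> partition_regular A.
Proof.
case/gen_columns_condition_finField=> l_gt0 colsum0 r _ chi.
pose y (j : 'I_l) : {ffun unit -> 'F_p} := [ffun _ => 1].
have io_inj : injective (fun _ : unit => i) by do 2!case.
exists (fun j => embed_Fp (fun _ => i) (y j)); split; [|split=> //].
  by apply: (nonzero_embed_Fp (y := y) io_inj); exists (Ordinal l_gt0), tt; rewrite ffunE oner_neq0.
apply: (solves_embed_Fp (y := y) io_inj (B := component_mod_p p A i)) => // a x.
move/matrixP: colsum0 => /(_ a 0); rewrite summxE mxE => colsum0.
by apply: etrans _ colsum0; apply: eq_bigr => j _; rewrite ffunE mulr1 !mxE.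
Qed.

Lemma partition_regular_of_columns_condition :
  infinitely_many (fun i => columns_condition (component_mod_p p A i)) ->
  partition_regular A.
Proof.
move=> inf_cc r _ chi.
have [B infB] := infinitely_many_pigeonhole
  (P := fun B i => columns_condition (component_mod_p p A i) /\ component_mod_p p A i = B)
  inf_cc (fun i cci => ex_intro _ _ (conj cci erefl)).
have ccB : columns_condition B.
  apply: contrapT => nccB; apply/infB/finitely_many0 => i [cci iB].
  by apply: nccB; rewrite -iB.
have [X monoX] := columns_condition_monochromatic ccB 'I_r.
have [g [g_inj gB]] := infinitely_many_injection infB #|X|.
pose io (x : X) := g (enum_rank x).
have io_inj : injective io by move=> x1 x2 /g_inj /enum_rank_inj.
have [y [y_sol y_nz y_mono]] := monoX (fun y => chi (embed_Fp io y)).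
exists (fun j => embed_Fp io (y j)); split; [exact: nonzero_embed_Fp | split=> //].
by apply: (solves_embed_Fp io_inj (B := B)) => // x; case: (gB (enum_rank x)).
Qed.

End Sufficiency.

(** * Necessity *)

Lemma gen_columns_condition_of_colsum (S : comNzRingType) k l (B : 'M[S]_(k, l)) :
  (0 < l)%N -> \sum_(j < l) col j B = 0 -> gen_columns_condition B.
Proof.
move=> l_gt0 colsum0; exists 0%N, (fun _ => ord0), (fun _ => 1).
split; first by move=> t; exists (Ordinal l_gt0); rewrite [t]ord1.
split; first by move=> t; rewrite oner_neq0.
split; first by rewrite scale1r; apply: etrans _ colsum0; apply: eq_bigl => j; rewrite eqxx.
by split=> // t; rewrite ord1 eqxx.
Qed.

(* A prime factor of [N %/ gcdn N w] would divide every [s a]. *)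
Lemma eq0_of_dvdn_mul (N w k : nat) (s : 'I_k -> nat) : (w < N)%N ->
  (forall p, prime p -> (p %| N)%N -> exists a, ~~ (p %| s a)%N) ->
  (forall a, (N %| s a * w)%N) -> w = 0%N.
Proof.
move=> wN s_coprime Nsw; apply/eqP; apply: contraT; rewrite -lt0n => w_gt0.
pose d := gcdn N w; have d_gt0 : (0 < d)%N by rewrite gcdn_gt0 w_gt0 orbT.
have Nd : N = (N %/ d * d)%N by rewrite divnK ?dvdn_gcdl.
have Nd_gt1 : (1 < N %/ d)%N.
  rewrite ltnNge; apply/negP => Nd_le1; move: wN; rewrite Nd.
  have : (d <= w)%N by rewrite dvdn_leq ?dvdn_gcdr.
  by move: Nd_le1 d_gt0; clear; nia.
have pN : (pdiv (N %/ d) %| N)%N by rewrite {2}Nd dvdn_mulr ?pdiv_dvd.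
have [a /negP[]] := s_coprime _ (pdiv_prime Nd_gt1) pN; apply: dvdn_trans (pdiv_dvd _) _.
have : (N %| s a * d)%N by rewrite /d muln_gcdr dvdn_gcd Nsw dvdn_mull.
by rewrite {1}Nd dvdn_pmul2r.
Qed.

Section Content.
Variables (I : Type) (N : nat).
Hypothesis N_gt0 : (0 < N)%N.

Definition common_divisor (y : I -> nat) d := (d %| N)%N /\ forall i, (d %| y i)%N.

(* The gcd of [N] and all the [y i], for a possibly infinite [I]. *)
Definition content (y : I -> nat) : nat :=
  \max_(d < N.+1 | `[< common_divisor y d >]) d.

Lemma contentP y :
  common_divisor y (content y) /\ forall d, common_divisor y d -> (d <= content y)%N.
Proof.
have cd1 : common_divisor y 1 by split=> *; apply: dvd1n.
split.
  rewrite /content; have [|d] := @eq_bigmax_cond _ [pred d : 'I_N.+1 | `[< common_divisor y d >]]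
    (fun d => nat_of_ord d); last by rewrite inE => /asboolP cd_d ->.
  by apply/card_gt0P; exists (inord 1); rewrite inE inordK ?ltnS //; apply/asboolP.
move=> d [dN dy]; have d_lt : (d < N.+1)%N by rewrite ltnS dvdn_leq.
by apply: (@leq_bigmax_cond _ _ (fun d => nat_of_ord d) (Ordinal d_lt)); apply/asboolP.
Qed.

Lemma content_gt0 y : (0 < content y)%N.
Proof. by apply: (contentP y).2; split=> *; apply: dvd1n. Qed.

Lemma content_dvdn y : (content y %| N)%N.
Proof. by case: (contentP y) => -[]. Qed.

Lemma dvdn_content y i : (content y %| y i)%N.
Proof. by case: (contentP y) => -[]. Qed.

Lemma content_le y : (content y <= N)%N.
Proof. exact: dvdn_leq (content_dvdn y). Qed.

Lemma exists_content_prime_ndvd y p : prime p -> (p %| N %/ content y)%N ->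
  exists i, ~~ (p %| y i %/ content y)%N.
Proof.
move=> p_pr p_dvd; apply: contrapT => p_dvd_all.
have [[eN ey] e_max] := contentP y; set e := content y in eN ey e_max p_dvd p_dvd_all *.
have : (e * p <= e)%N.
  apply: e_max; split; first by rewrite -(divnK eN) mulnC dvdn_pmul2r ?content_gt0.
  move=> i; rewrite -(divnK (ey i)) [X in (_ %| X)%N]mulnC dvdn_pmul2l ?content_gt0 //.
  by apply/negPn/negP => np; apply: p_dvd_all; exists i.
by rewrite -{2}(muln1 e) leq_pmul2l ?content_gt0 // leqNgt prime_gt1.
Qed.

End Content.

Section Necessity.
Variables (I : Type) (n k l : nat) (A : 'M[Rprod I n.+1]_(k, l)).
Local Notation N := n.+1.

Lemma reduced_solution_Fp (x : 'I_l -> Rprod I N) e p : solves A x ->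
  (e %| N)%N -> (forall j i, e %| x j i)%N -> prime p -> (p %| N %/ e)%N ->
  forall a i, \sum_(j < l) ((A a j i)%:R * (x j i %/ e)%:R : 'F_p) = 0.
Proof.
move=> x_sol eN ex p_pr p_dvd a i; have e_gt0 : (0 < e)%N by case: e eN {ex p_dvd}.
under eq_bigr => j _ do rewrite -natrM.
apply/eqP; rewrite -natr_sum -(dvdn_pcharf (pchar_Fp p_pr)); apply: dvdn_trans p_dvd _.
rewrite -(@dvdn_pmul2r e) // divnK // big_distrl /=.
rewrite (eq_bigr (fun j => A a j i * x j i)%N) => [|j _]; last by rewrite -mulnA divnK.
exact/eqP/x_sol.
Qed.

Variable R : rel I.
Hypotheses (R_tr : transitive R) (R_tot : total R) (R_anti : antisymmetric R).
Hypothesis R_least :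
  forall P : I -> Prop, (exists i, P i) -> exists z, P z /\ forall i, P i -> R z i.
Variables (M : nat) (G : 'I_M -> I).

Local Notation cont y := (content N (fun i => nat_of_ord (y i))).

(* Writing [y = e * u] with [e] the content of [y], [u] does not vanish modulo
   the prime [content_prime y] (a factor of [N %/ e]), and [lead y] is the
   [R]-least coordinate where it does not. *)
Definition content_prime (y : Rprod I N) := pdiv (N %/ cont y).

Definition reduced_support (y : Rprod I N) i := ~~ (content_prime y %| y i %/ cont y)%N.

Definition lead (y : Rprod I N) : option I :=
  if pselect (exists z, reduced_support y z /\ forall i, reduced_support y i -> R z i)
  is left h then Some (projT1 (cid h)) else None.

(* Equal colours make the coordinates in [G] constant and the content common,
   and give leading coordinates with the same column of [A] and the same value. *)
Definition colour (y : Rprod I N) :=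
  ([ffun q => y (G q)], (inord (cont y) : 'I_N.+1),
   omap (fun i => ([ffun ab : 'I_k * 'I_l => A ab.1 ab.2 i], y i)) (lead y)).

Lemma content_prime_dvdn (y : Rprod I N) i : (y i : nat) != 0%N ->
  prime (content_prime y) /\ (content_prime y %| N %/ cont y)%N.
Proof.
move=> yi_nz; have [[eN ey] _] := contentP (ltn0Sn n) (fun i => nat_of_ord (y i)).
have e_gt0 := content_gt0 (ltn0Sn n) (fun i => nat_of_ord (y i)).
suff Ne_gt1 : (1 < N %/ cont y)%N by split; [apply: pdiv_prime | apply: pdiv_dvd].
rewrite ltnNge; apply/negP => Ne_le1.
have e_lt : (cont y < N)%N.
  by apply: leq_ltn_trans (ltn_ord (y i)); apply: dvdn_leq; rewrite ?lt0n.
have [q Nq] := dvdnP eN; set e := cont y in e_gt0 e_lt Ne_le1 Nq.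
move: Ne_le1; rewrite Nq mulnK // => q_le1; clearbody e.
by move: e_lt; rewrite Nq; case: q q_le1 {Nq} => [|[|]] //; rewrite mul1n ltnn.
Qed.

Lemma lead_spec y z : lead y = Some z ->
  reduced_support y z /\ forall i, reduced_support y i -> R z i.
Proof. by rewrite /lead; case: pselect => // h [<-]; case: (cid h). Qed.

Lemma colour_content y y' : colour y' = colour y -> cont y' = cont y.
Proof.
move/(congr1 (fun c => val c.1.2)) => /=.
by rewrite !inordK // ltnS content_le.
Qed.

Lemma colour_lead y y' z : colour y' = colour y -> lead y = Some z ->
  exists z', [/\ lead y' = Some z', forall a b, A a b z' = A a b z & y' z' = y z].
Proof.
move/(congr1 (fun c => c.2)) => /= + lead_z; rewrite lead_z.
case: (lead y') => //= z' [/ffunP A_z' y'_z']; exists z'; split=> // a b.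
by move: (A_z' (a, b)); rewrite !ffunE.
Qed.

Lemma lead_exists (y : Rprod I N) i : (y i : nat) != 0%N -> exists z, lead y = Some z.
Proof.
move=> /content_prime_dvdn[p_pr p_dvd].
have [z [z_supp z_min]] := R_least (exists_content_prime_ndvd (ltn0Sn n) p_pr p_dvd).
by rewrite /lead; case: pselect => [h|[]]; [exists (projT1 (cid h)) | exists z].
Qed.

Lemma columns_condition_at_lead (x : 'I_l -> Rprod I N) j1 i1 : solves A x ->
  (x j1 i1 : nat) != 0%N -> (forall j, colour (x j) = colour (x j1)) ->
  exists2 i, (x j1 i : nat) != 0%N &
    columns_condition (component_mod_p (content_prime (x j1)) A i).
Proof.
move=> x_sol x_nz colourE; have [z1 lead1] := lead_exists x_nz.
have [p_pr p_dvd] := content_prime_dvdn x_nz.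
set e := cont (x j1) in p_dvd; set p := content_prime (x j1) in p_pr p_dvd *.
have eE j : cont (x j) = e by apply: colour_content.
have eN : (e %| N)%N by apply: content_dvdn.
have ex j i : (e %| x j i)%N by rewrite -(eE j) dvdn_content.
pose U j i : 'F_p := (x j i %/ e)%:R.
have suppE j i : reduced_support (x j) i = (U j i != 0).
  by rewrite /reduced_support /content_prime !eE -/p (dvdn_pcharf (pchar_Fp p_pr)).
pose L j := odflt z1 (lead (x j)).
have [L_lead L_A L_x] : [/\ forall j, lead (x j) = Some (L j),
    forall j a b, A a b (L j) = A a b z1 & forall j, x j (L j) = x j1 z1].
  by split=> j *; have [z [lead_z ? ?]] := colour_lead (colourE j) lead1; rewrite /L lead_z.
have z1_supp : U j1 z1 != 0 by rewrite -suppE; case: (lead_spec lead1).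
exists z1; first by apply: contraNneq z1_supp => x0; rewrite /U x0 div0n.
apply: (@columns_condition_of_leading_solutions _ {classic I} R _ _ _ L U (U j1 z1)) => //.
- exact: leq_ltn_trans (leq0n _) (ltn_ord j1).
- by move=> j; rewrite /U L_x.
- by move=> j i; rewrite -suppE => /(lead_spec (L_lead j)).2.
- move=> j a; apply: etrans _ (reduced_solution_Fp x_sol eN ex p_pr p_dvd a (L j)).
  by apply: eq_bigr => j' _; rewrite mxE L_A.
Qed.

Hypothesis row_sums_ndvd :
  forall i p, prime p -> (p %| N)%N -> exists a, ~~ (p %| \sum_(j < l) A a j i)%N.
Hypothesis G_cc : forall p i, prime p -> (p %| N)%N ->
  columns_condition (component_mod_p p A i) -> exists q, G q = i.

Lemma constant_coordinate_eq0 (x : 'I_l -> Rprod I N) i j1 :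
  solves A x -> (forall j, x j i = x j1 i) -> x j1 i = 0%N :> nat.
Proof.
move=> x_sol x_const; apply: (eq0_of_dvdn_mul (ltn_ord _) (row_sums_ndvd i)) => a.
apply/eqP; apply: etrans _ (x_sol a i); rewrite big_distrl /=.
by congr (_ %% _)%N; apply: eq_bigr => j _; rewrite x_const.
Qed.

Lemma not_partition_regular : ~ partition_regular A.
Proof.
move=> PR; have [x [[j1 [i1 x_nz]] [x_sol x_mono]]] :=
  PR _ (leq_ltn_trans (leq0n _) (ltn_ord (enum_rank (colour (fun _ => ord0)))))
     (fun y => enum_rank (colour y)).
have colourE j : colour (x j) = colour (x j1) by apply/enum_rank_inj/x_mono.
have [i xi_nz cc_i] := columns_condition_at_lead x_sol x_nz colourE.
have [p_pr p_dvd] := content_prime_dvdn xi_nz.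
have [q Gq] := G_cc p_pr (dvdn_trans p_dvd (dvdn_div (content_dvdn (ltn0Sn n) _))) cc_i.
move: xi_nz; rewrite -Gq constant_coordinate_eq0 // => j.
by have /ffunP/(_ q) := congr1 (fun c => c.1.1) (colourE j); rewrite !ffunE.
Qed.

End Necessity.

Lemma partition_regular_necessary (I : Type) (n k l : nat) (A : 'M[Rprod I n.+1]_(k, l)) :
  partition_regular A ->
  exists p : nat, prime p /\ (p %| n.+1)%N /\
    ((exists i : I, gen_columns_condition (component_mod_p p A i)) \/
     infinitely_many (fun i : I => columns_condition (component_mod_p p A i))).
Proof.
move=> PR; apply: contrapT => not_rado.
have [x [[j0 _] _]] := PR 1%N isT (fun _ => ord0).
have [R [R_tr R_tot R_anti R_least]] := exists_well_order I.
have row_sums_ndvd i p : prime p -> (p %| n.+1)%N ->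
    exists a, ~~ (p %| \sum_(j < l) A a j i)%N.
  move=> p_pr pN; apply: contrapT => all_dvd; apply: not_rado; exists p.
  do 2!split=> //; left; exists i; apply: gen_columns_condition_of_colsum.
    exact: leq_ltn_trans (leq0n _) (ltn_ord j0).
  apply/matrixP=> a b; rewrite ord1 summxE mxE; under eq_bigr do rewrite !mxE.
  apply/eqP; rewrite -natr_sum -(dvdn_pcharf (pchar_Fp p_pr)).
  by apply/negPn/negP => ndvd; apply: all_dvd; exists a.
have [M [G G_all]] : finitely_many (fun i => exists p : 'I_n.+2,
    [/\ prime p, (p %| n.+1)%N & columns_condition (component_mod_p p A i)]).
  apply: finitely_many_exists => p.
  case: (pselect (prime p /\ (p %| n.+1)%N)) => [[p_pr pN]|not_p]; last first.
    by apply: finitely_many0 => i [p_pr pN _]; apply: not_p.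
  apply: contrapT => inf_p; apply: not_rado; exists p; do 2!split=> //; right.
  by move=> fin_p; apply: inf_p; apply: sub_finitely_many fin_p => i [].
apply: (not_partition_regular R_tr R_tot R_anti R_least row_sums_ndvd (G := G) _ PR).
move=> p i p_pr pN cc_i; apply: G_all.
have p_lt : (p < n.+2)%N by rewrite ltnS dvdn_leq.
by exists (Ordinal p_lt).
Qed.

Local Close Scope ring_scope.
Unset Implicit Arguments.

Theorem proposition4p6 (I : Type) (n k l : nat) (A : 'M[Rprod I n]_(k, l)) :
  (0 < n)%N ->
  (partition_regular A <->
   exists p : nat, prime p /\ (p %| n)%N /\
     ((exists i : I, gen_columns_condition (component_mod_p p A i)) \/
      infinitely_many (fun i : I => columns_condition (component_mod_p p A i)))).
Proof.
case: n A => [//|n] A _; split; first exact: partition_regular_necessary.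
case=> p [p_pr [pN [[i gcc_i]|inf_cc]]].
  exact: partition_regular_of_gen_columns_condition gcc_i.
exact: partition_regular_of_columns_condition inf_cc.
Qed.
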